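(* Let $(H_X,H_Z)$ be a CSS code on $n$ qubits with $k$ logical qubits and $Z$-distance $d_Z$. Define the CSS code on $2n$ qubits with $X$-stabilizer matrix $H'_X=\begin{pmatrix}H_X&H_X\\0&H_Z\end{pmatrix}$ and $Z$-stabilizer matrix $H'_Z=\begin{pmatrix}H_Z&0\\H_X&H_X\end{pmatrix}$. Then $H'_X{H'_Z}^T=0$, the code encodes $2k$ logical qubits, and its $X$- and $Z$-distances are both equal to $$d'=\min\Big[d_Z,\ \min_{l\in\ker H_Z\setminus\mathrm{rs}(H_X),\ g\in\ker H_X}\big(2|l|+|g|-2|l\wedge g|\big)\Big].$$
   Context: Arithmetic over $\mathbb F_2$; $|v|$ is Hamming weight; $l\wedge g$ is the coordinatewise product; $\mathrm{rs}$ is row space and $\ker M=\{v:Mv^T=0\}$. For a CSS code $(H_X,H_Z)$: $k=n-\operatorname{rank}H_X-\operatorname{rank}H_Z$, $d_X=\min\{|v|:v\in\ker H_Z\setminus\mathrm{rs}(H_X)\}$, $d_Z=\min\{|v|:v\in\ker H_X\setminus\mathrm{rs}(H_Z)\}$. The new code corresponds to placing the code and its Hadamard-dual side by side and applying transversal CNOTs from the first to the second block. *)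

From mathcomp Require Import all_boot all_order all_algebra.
Set Implicit Arguments. Unset Strict Implicit. Unset Printing Implicit Defensive.
Import GRing.Theory.
Local Open Scope ring_scope.

Notation F2 := 'F_2.

Definition wt n (v : 'rV[F2]_n) : nat := #|[set j : 'I_n | v 0 j != 0]|.

Definition vand n (l g : 'rV[F2]_n) : 'rV[F2]_n := \row_j (l 0 j * g 0 j).

Definition inker m n (M : 'M[F2]_(m, n)) (v : 'rV[F2]_n) : bool :=
  M *m v^T == 0.

Definition inrs m n (M : 'M[F2]_(m, n)) (v : 'rV[F2]_n) : bool :=
  (v <= M)%MS.

(* Minimum of f over the (finite) set {x | P x}; the value [top] is returned
   only if the set is empty (it is always chosen >= every f x). *)
Definition minover (T : finType) (P : pred T) (f : T -> nat) (top : nat) : nat :=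
  \big[minn/top]_(x | P x) f x.

Definition css_k mx mz n (HX : 'M[F2]_(mx, n)) (HZ : 'M[F2]_(mz, n)) : nat :=
  (n - \rank HX - \rank HZ)%N.

Definition css_dX mx mz n (HX : 'M[F2]_(mx, n)) (HZ : 'M[F2]_(mz, n)) : nat :=
  minover (fun v : 'rV[F2]_n => inker HZ v && ~~ inrs HX v) (@wt n) n.

Definition css_dZ mx mz n (HX : 'M[F2]_(mx, n)) (HZ : 'M[F2]_(mz, n)) : nat :=
  minover (fun v : 'rV[F2]_n => inker HX v && ~~ inrs HZ v) (@wt n) n.

Definition newHX mx mz n (HX : 'M[F2]_(mx, n)) (HZ : 'M[F2]_(mz, n))
  : 'M[F2]_(mx + mz, n + n) := block_mx HX HX 0 HZ.
Definition newHZ mx mz n (HX : 'M[F2]_(mx, n)) (HZ : 'M[F2]_(mz, n))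
  : 'M[F2]_(mz + mx, n + n) := block_mx HZ 0 HX HX.

Definition dprime mx mz n (HX : 'M[F2]_(mx, n)) (HZ : 'M[F2]_(mz, n)) : nat :=
  minn (css_dZ HX HZ)
    (minover (fun l : 'rV[F2]_n => inker HZ l && ~~ inrs HX l)
       (fun l => minover (fun g : 'rV[F2]_n => inker HX g)
                   (fun g => 2 * wt l + wt g - 2 * wt (vand l g))%N (2 * n)%N)
       (2 * n)%N).

From mathcomp Require Import all_boot all_order all_algebra.
From mathcomp Require Import zify.
Local Open Scope ring_scope.
Import GRing.Theory.
Set Implicit Arguments. Unset Strict Implicit.

(* A logical operator of the new code is a pair [row_mx a b]; writing g := a + b,
   the conditions on it split into conditions on (a, g) for the old code, and its
   weight is |a| + |a + g| = 2|a| + |g| - 2|a /\ g|.  If a is not an X-stabilizer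
   this is the second term of d'; if it is, then g must be a nontrivial Z-logical
   of the old code and |a| + |a + g| >= |g| >= d_Z.  The same holds for the Z-side
   after exchanging the two blocks. *)

Lemma F2_char2 : 2 \in [pchar 'F_2].
Proof. exact: pchar_Fp. Qed.

Lemma F2_add_neq0 (x y : 'F_2) : (x + y != 0) = (x != 0) (+) (y != 0).
Proof. by case: x => [[|[|i]]] //= Hi; case: y => [[|[|j]]]. Qed.

Lemma F2_mul_neq0 (x y : 'F_2) : (x * y != 0) = (x != 0) && (y != 0).
Proof. by case: x => [[|[|i]]] //= Hi; case: y => [[|[|j]]]. Qed.

Lemma F2mx_addxx m n (A : 'M['F_2]_(m, n)) : A + A = 0.
Proof. by apply/matrixP=> i j; rewrite !mxE (addrr_pchar2 F2_char2). Qed.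

Lemma F2mx_addKr m n (A B : 'M['F_2]_(m, n)) : A + (A + B) = B.
Proof. by rewrite addrA F2mx_addxx add0r. Qed.

Section MinOver.
Variables (T : finType) (P : pred T) (f : T -> nat) (top : nat).

Lemma minover_le_top : (minover P f top <= top)%N.
Proof. by rewrite /minover; elim/big_rec: _ => // i x _; rewrite geq_min => ->; rewrite orbT. Qed.

Lemma minover_le x : P x -> (minover P f top <= f x)%N.
Proof.
move=> Px; rewrite /minover; have : x \in index_enum T by rewrite mem_index_enum.
elim: (index_enum T) => // i r IH; rewrite big_cons inE.
case/orP=> [/eqP <-|/IH le_x]; first by rewrite Px geq_minl.
by case: (P i); rewrite // geq_min le_x orbT.
Qed.

Lemma minover_geq m :
  (m <= top)%N -> (forall x, P x -> m <= f x)%N -> (m <= minover P f top)%N.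
Proof. by move=> mtop mf; rewrite /minover; elim/big_ind: _ => // x y; rewrite leq_min => ->. Qed.

Lemma minover_eq m :
  (m <= top)%N -> (forall x, P x -> m <= f x)%N -> (exists2 x, P x & f x <= m)%N ->
  minover P f top = m.
Proof.
move=> mtop mf [x Px fx]; apply/eqP; rewrite eqn_leq minover_geq // andbT.
exact: leq_trans (minover_le Px) fx.
Qed.

Lemma minover_attained x0 :
  P x0 -> (forall x, P x -> f x <= top)%N -> exists2 x, P x & minover P f top = f x.
Proof.
move=> Px0 ftop; case: (arg_minnP f Px0) => x Px xmin; exists x => //.
by apply: minover_eq => [||]; [exact: ftop | exact: xmin | exists x].
Qed.
End MinOver.

Section Weight.
Variable n : nat.
Implicit Types a g : 'rV['F_2]_n.

Lemma wt_le a : (wt a <= n)%N.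
Proof. by rewrite /wt (leq_trans (max_card _)) ?card_ord. Qed.

Lemma wt0 : wt (0 : 'rV['F_2]_n) = 0%N.
Proof. by apply/eqP; rewrite cards_eq0; apply/eqP/setP => j; rewrite !inE mxE eqxx. Qed.

Lemma wt_row_mx a (b : 'rV['F_2]_n) : wt (row_mx a b) = (wt a + wt b)%N.
Proof.
rewrite /wt -!sum1_card big_split_ord /=.
by congr (_ + _)%N; apply: eq_bigl => j; rewrite !inE ?row_mxEl ?row_mxEr.
Qed.

(* The supports satisfy supp (a + g) = supp a (+) supp g and supp (a /\ g) = supp a :&: supp g. *)
Lemma wt_add_vand a g : (wt (a + g) + 2 * wt (vand a g) = wt a + wt g)%N.
Proof.
rewrite /wt; set A := [set j | a 0 j != 0]; set G := [set j | g 0 j != 0].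
have -> : [set j | (a + g) 0 j != 0] = (A :|: G) :\: (A :&: G).
  by apply/setP=> j; rewrite !inE mxE F2_add_neq0; case: (a 0 j != 0); case: (g 0 j != 0).
have -> : [set j | vand a g 0 j != 0] = A :&: G.
  by apply/setP=> j; rewrite !inE mxE F2_mul_neq0.
have sIU : A :&: G \subset A :|: G by rewrite (subset_trans (subsetIl _ _) (subsetUl _ _)).
rewrite -cardsUI cardsD (setIidPr sIU).
have := subset_leq_card sIU; lia.
Qed.

Lemma wt_cross_term a g :
  (2 * wt a + wt g - 2 * wt (vand a g) = wt a + wt (a + g))%N.
Proof. have := wt_add_vand a g; lia. Qed.
End Weight.

Lemma inker0 m n (A : 'M['F_2]_(m, n)) : inker A 0.
Proof. by rewrite /inker trmx0 mulmx0. Qed.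

Lemma exists_ker_notin_rs m1 m2 n (A : 'M['F_2]_(m1, n)) (B : 'M['F_2]_(m2, n)) :
  (0 < n - \rank A - \rank B)%N -> exists v, inker A v && ~~ inrs B v.
Proof.
move=> k_gt0; have : ~~ (kermx A^T <= B)%MS.
  by apply/negP=> /mxrankS; rewrite mxrank_ker mxrank_tr; lia.
case/row_subPn => i notB; exists (row i (kermx A^T)); rewrite /inrs notB andbT.
by rewrite /inker -[A]trmxK -trmx_mul trmxK (sub_kermxP (row_sub i _)) trmx0.
Qed.

Section NewCode.
Variables (mx mz n : nat) (HX : 'M['F_2]_(mx, n)) (HZ : 'M['F_2]_(mz, n)).

Lemma newHX_mul_trnewHZ : HX *m HZ^T = 0 -> newHX HX HZ *m (newHZ HX HZ)^T = 0.
Proof.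
move=> orth; have orth' : HZ *m HX^T = 0 by rewrite -[HZ]trmxK -trmx_mul orth trmx0.
rewrite /newHX /newHZ tr_block_mx mulmx_block !trmx0 !mulmx0 !mul0mx.
by rewrite !addr0 !add0r orth orth' F2mx_addxx block_mx0.
Qed.

(* Both new stabilizer matrices are diag(., .) times a unitriangular block matrix. *)
Lemma mxrank_newHX : \rank (newHX HX HZ) = (\rank HX + \rank HZ)%N.
Proof.
have -> : newHX HX HZ = block_mx HX 0 0 HZ *m block_mx 1%:M 1%:M 0 1%:M.
  by rewrite mulmx_block !mulmx0 !mul0mx !mulmx1 !addr0 !add0r.
rewrite mxrankMfree ?rank_diag_block_mx // row_free_unit unitmxE det_ublock.
by rewrite det1 mulr1 unitr1.
Qed.

Lemma mxrank_newHZ : \rank (newHZ HX HZ) = (\rank HZ + \rank HX)%N.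
Proof.
have -> : newHZ HX HZ = block_mx HZ 0 0 HX *m block_mx 1%:M 0 1%:M 1%:M.
  by rewrite mulmx_block !mulmx0 !mul0mx !mulmx1 !addr0 !add0r.
rewrite mxrankMfree ?rank_diag_block_mx // row_free_unit unitmxE det_lblock.
by rewrite det1 mulr1 unitr1.
Qed.

Lemma css_k_new : css_k (newHX HX HZ) (newHZ HX HZ) = (2 * css_k HX HZ)%N.
Proof. by rewrite /css_k mxrank_newHX mxrank_newHZ; lia. Qed.

Implicit Types a b : 'rV['F_2]_n.

Lemma inker_newHZ_row a b :
  inker (newHZ HX HZ) (row_mx a b) = inker HZ a && inker HX (a + b).
Proof.
by rewrite /inker /newHZ tr_row_mx mul_block_col col_mx_eq0 mul0mx addr0 raddfD mulmxDr.
Qed.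

Lemma inker_newHX_row a b :
  inker (newHX HX HZ) (row_mx a b) = inker HX (a + b) && inker HZ b.
Proof.
by rewrite /inker /newHX tr_row_mx mul_block_col col_mx_eq0 mul0mx add0r raddfD mulmxDr.
Qed.

Lemma inrs_newHX_row a b :
  inrs (newHX HX HZ) (row_mx a b) = inrs HX a && inrs HZ (a + b).
Proof.
rewrite /inrs; apply/idP/andP => [/submxP[x] | [/submxP[x ->] /submxP[y ab]]].
  rewrite -[x]hsubmxK /newHX mul_row_block mulmx0 addr0 => /eq_row_mx[-> ->].
  by rewrite F2mx_addKr !submxMl.
apply/submxP; exists (row_mx x y).
by rewrite /newHX mul_row_block mulmx0 addr0 -ab F2mx_addKr.
Qed.

Lemma inrs_newHZ_row a b :
  inrs (newHZ HX HZ) (row_mx a b) = inrs HX b && inrs HZ (a + b).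
Proof.
rewrite /inrs; apply/idP/andP => [/submxP[x] | [/submxP[x ->] /submxP[y ab]]].
  rewrite -[x]hsubmxK /newHZ mul_row_block mulmx0 add0r => /eq_row_mx[-> ->].
  by rewrite -addrA F2mx_addxx addr0 !submxMl.
apply/submxP; exists (row_mx y x).
by rewrite /newHZ mul_row_block mulmx0 add0r -ab -addrA F2mx_addxx addr0.
Qed.

Definition admissible a g :=
  [&& inker HZ a, inker HX g & ~~ (inrs HX a && inrs HZ g)].

Definition pair_wt a g := (wt a + wt (a + g))%N.

Lemma dprime_le_top : (dprime HX HZ <= n + n)%N.
Proof. exact: leq_trans (geq_minl _ _) (leq_trans (minover_le_top _ _ _) (leq_addr n n)). Qed.

Lemma dprime_le_pair_wt a g : admissible a g -> (dprime HX HZ <= pair_wt a g)%N.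
Proof.
case/and3P=> kerZa kerXg; rewrite /dprime /pair_wt; case rsXa: (inrs HX a) => /= rsZg.
  apply: leq_trans (geq_minl _ _) (leq_trans (minover_le _ _ (x := g) _) _).
    by rewrite kerXg rsZg.
  by have := wt_add_vand a (a + g); rewrite F2mx_addKr; lia.
apply: leq_trans (geq_minr _ _) (leq_trans (minover_le _ _ (x := a) _) _).
  by rewrite kerZa rsXa.
by rewrite (leq_trans (minover_le _ _ (x := g) _)) // wt_cross_term.
Qed.

Lemma dprime_pair_wt_attained : (0 < css_k HX HZ)%N ->
  exists a, exists2 g, admissible a g & pair_wt a g = dprime HX HZ.
Proof.
rewrite /css_k => k_gt0.
have [g0 g0_logical] := exists_ker_notin_rs k_gt0.
have [g1 /andP[kerXg1 rsZg1] dZE] :=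
  minover_attained (P := fun v => inker HX v && ~~ inrs HZ v) (top := n) g0_logical
    (fun x _ => wt_le x).
rewrite subnAC in k_gt0; have [l0 l0_logical] := exists_ker_notin_rs k_gt0.
set inner := fun l => minover (inker HX)
  (fun g => 2 * wt l + wt g - 2 * wt (vand l g))%N (2 * n).
have [l /andP[kerZl rsXl] dE] :=
  minover_attained (P := fun v => inker HZ v && ~~ inrs HX v) (f := inner) l0_logical
    (fun x _ => minover_le_top _ _ _).
have inner_le_top g : inker HX g -> (2 * wt l + wt g - 2 * wt (vand l g) <= 2 * n)%N.
  by move=> _; rewrite wt_cross_term mul2n -addnn leq_add ?wt_le.
have [g kerXg innerE] := minover_attained (inker0 HX) inner_le_top.
rewrite /dprime -/inner; case: leqP => _.
  exists 0, g1; last by rewrite /pair_wt wt0 add0r /css_dZ dZE.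
  by rewrite /admissible inker0 kerXg1 (negbTE rsZg1) andbF.
exists l, g; last by rewrite dE /inner innerE wt_cross_term.
by rewrite /admissible kerZl kerXg (negbTE rsXl).
Qed.

Lemma css_dX_new : (0 < css_k HX HZ)%N ->
  css_dX (newHX HX HZ) (newHZ HX HZ) = dprime HX HZ.
Proof.
move=> k_gt0; apply: minover_eq; first exact: dprime_le_top.
  move=> v; rewrite -[v]hsubmxK; move: (lsubmx v) (rsubmx v) => a b /=.
  rewrite inker_newHZ_row inrs_newHX_row wt_row_mx => /andP[/andP[kerZa kerXab] rs].
  have := @dprime_le_pair_wt a (a + b); rewrite /pair_wt F2mx_addKr; apply.
  by rewrite /admissible kerZa kerXab.
have [a [g /and3P[kerZa kerXg rs] wtE]] := dprime_pair_wt_attained k_gt0.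
exists (row_mx a (a + g)); last by rewrite wt_row_mx -wtE.
by rewrite inker_newHZ_row inrs_newHX_row F2mx_addKr kerZa kerXg.
Qed.

Lemma css_dZ_new : (0 < css_k HX HZ)%N ->
  css_dZ (newHX HX HZ) (newHZ HX HZ) = dprime HX HZ.
Proof.
move=> k_gt0; apply: minover_eq; first exact: dprime_le_top.
  move=> v; rewrite -[v]hsubmxK; move: (lsubmx v) (rsubmx v) => a b /=.
  rewrite inker_newHX_row inrs_newHZ_row wt_row_mx => /andP[/andP[kerXab kerZb] rs].
  have := @dprime_le_pair_wt b (b + a); rewrite /pair_wt F2mx_addKr addnC; apply.
  by rewrite /admissible kerZb addrC kerXab.
have [a [g /and3P[kerZa kerXg rs] wtE]] := dprime_pair_wt_attained k_gt0.
exists (row_mx (a + g) a); last by rewrite wt_row_mx addnC -wtE.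
by rewrite inker_newHX_row inrs_newHZ_row addrC F2mx_addKr kerZa kerXg andbT.
Qed.
End NewCode.

Theorem mainTheorem17 (n mx mz : nat)
  (HX : 'M['F_2]_(mx, n)) (HZ : 'M['F_2]_(mz, n)) :
  HX *m HZ^T = 0 ->
  (0 < css_k HX HZ)%N ->
  [/\ newHX HX HZ *m (newHZ HX HZ)^T = 0,
      css_k (newHX HX HZ) (newHZ HX HZ) = (2 * css_k HX HZ)%N,
      css_dX (newHX HX HZ) (newHZ HX HZ) = dprime HX HZ
    & css_dZ (newHX HX HZ) (newHZ HX HZ) = dprime HX HZ].
Proof.
move=> orth k_gt0; split.
- exact: newHX_mul_trnewHZ orth.
- exact: css_k_new.
- exact: css_dX_new k_gt0.
- exact: css_dZ_new k_gt0.
Qed.
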